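(* Let $\mu=(d_1,d_2,\dots)$ be a sequence of positive integers and let $t=(t_1,t_2,\dots)\in\prod_n\mathrm{Mat}_{d_n\times d_n}(\mathbb{C})$ with $\sup_n\|t_n\|<\infty$, such that each $t_n$ is self-adjoint and all the $t_n$ together have only finitely many distinct eigenvalues. Then $\mathrm{rk}_1([t]_{\mathcal{M}_\mu})=\mathrm{rk}_2([t]_{\mathcal{M}^{alg}_\mu})$.
   Context: Fix a nonprincipal ultrafilter $\omega$ on $\mathbb{N}$. $\mathcal{M}_\mu$ is the tracial ultraproduct: the quotient of the algebra $\mathcal{B}$ of bounded sequences $(a_n)\in\prod_n\mathrm{Mat}_{d_n\times d_n}(\mathbb{C})$ by the ideal of those with $\lim_\omega tr(a_n^*a_n)/d_n=0$, a finite von Neumann algebra with trace $Tr_\omega([a_n])=\lim_\omega tr(a_n)/d_n$; $[t]_{\mathcal{M}_\mu}$ is the class of $t$ there, and $\mathrm{rk}_1(x)$ is the rank of $x$ as an element of the ring $U(\mathcal{M}_\mu)$ of affiliated operators, i.e. $Tr_\omega$ of the projection generating the right ideal $xU(\mathcal{M}_\mu)$. $\mathcal{M}^{alg}_\mu$ is the quotient of $\prod_n\mathrm{Mat}_{d_n\times d_n}(\mathbb{C})$ by the ideal of sequences with $\lim_\omega\mathrm{rank}(a_n)/d_n=0$, with rank $\mathrm{rk}_2([a_n])=\lim_\omega\mathrm{rank}(a_n)/d_n$; $[t]_{\mathcal{M}^{alg}_\mu}$ is the class of $t$ there. *)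

From HB Require Import structures.
From mathcomp Require Import all_boot all_order all_algebra.
From mathcomp Require Import complex.
From mathcomp Require Import all_classical all_reals.
From mathcomp Require Import topology normedtype.
From mathcomp Require Import Rstruct Rstruct_topology.
Set Implicit Arguments. Unset Strict Implicit. Unset Printing Implicit Defensive.
Import Order.TTheory GRing.Theory Num.Theory.
Local Open Scope ring_scope.
Local Open Scope classical_set_scope.

Notation RR := Rdefinitions.R.
Notation CC := (complex RR).

Definition nonprincipal_ultrafilter (w : set_system nat) : Prop :=
  [/\ ProperFilter w,
      (forall A : set nat, w A \/ w (~` A)) &
      (forall k : nat, ~ w [set k])].

(* ultralimit of a real sequence (well defined for bounded sequences) *)
Definition ulim (w : set_system nat) (u : nat -> RR) : RR := lim (u @ w).

Definition adj (m : nat) (A : 'M[CC]_m) : 'M[CC]_m :=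
  \matrix_(i, j) (A j i)^*.

Definition vnorm2 (m : nat) (v : 'cV[CC]_m) : CC := \sum_i `|v i 0| ^+ 2.

Definition mxseq (d : nat -> nat) := forall n : nat, 'M[CC]_(d n).

Definition op_bounded (d : nat -> nat) (t : mxseq d) : Prop :=
  exists c : RR, forall (n : nat) (v : 'cV[CC]_(d n)),
    vnorm2 (t n *m v) <= (c%:C)%C ^+ 2 * vnorm2 v.

Definition ntrRe (m : nat) (a : 'M[CC]_m) : RR := @complex.Re RR (\tr a) / m%:R.

Definition nhs2 (m : nat) (a : 'M[CC]_m) : RR := ntrRe (adj a *m a).

(* equality of classes in M_mu = B / {lim_w tr(a_n^* a_n)/d_n = 0} *)
Definition Meq (w : set_system nat) (d : nat -> nat) (a b : mxseq d) : Prop :=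
  ulim w (fun n => nhs2 (a n - b n)) = 0.

Definition Mproj (w : set_system nat) (d : nat -> nat) (p : mxseq d) : Prop :=
  [/\ op_bounded p,
      Meq w (fun n => p n *m p n) p &
      Meq w (fun n => adj (p n)) p].

(* Tr_w([a]) (real part; for a projection it is real) *)
Definition Mtr (w : set_system nat) (d : nat -> nat) (a : mxseq d) : RR :=
  ulim w (fun n => ntrRe (a n)).

(* rk_1([x]) = rank of [x] in U(M_mu) = Tr_w of the projection generating
   [x] U(M_mu), i.e. of the left support projection of [x], which is the
   least projection p of M_mu with p[x] = [x]. *)
Definition rk1 (w : set_system nat) (d : nat -> nat) (x : mxseq d) : RR :=
  inf [set r : RR | exists p : mxseq d,
         [/\ Mproj w p, Meq w (fun n => p n *m x n) x & r = Mtr w p]].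

Definition rk2 (w : set_system nat) (d : nat -> nat) (a : mxseq d) : RR :=
  ulim w (fun n => (\rank (a n))%:R / (d n)%:R).

From HB Require Import structures.
From mathcomp Require Import all_boot all_order all_algebra.
From mathcomp Require Import complex.
From mathcomp Require Import all_classical all_reals.
From mathcomp Require Import topology normedtype.
From mathcomp Require Import Rstruct Rstruct_topology.
From mathcomp Require Import spectral.
From mathcomp Require Import ring lra.
Set Implicit Arguments. Unset Strict Implicit. Unset Printing Implicit Defensive.
Import Order.TTheory GRing.Theory Num.Theory.
Local Open Scope ring_scope.
Local Open Scope classical_set_scope.

(* Diagonalize t_n = U_n^* D_n U_n and let g_n be its Moore-Penrose inverse.
   Then q_n = t_n g_n is the orthogonal projection onto the range of t_n, so
   tr(q_n)/d_n = rank(t_n)/d_n, and since the spectrum is finite, g_n is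
   uniformly bounded: |X g_n|_2 <= K |X|_2.  Hence [q] is a projection of M_mu
   with [q][t] = [t] and trace rk_2, which gives rk_1 <= rk_2.
   Conversely, let [p] be any projection with [p][t] = [t].  Writing
   q_n = p_n q_n + (t_n - p_n t_n) g_n gives, for every e > 0,
   |q_n|_2^2 <= (1 + e)|p_n|_2^2 + (1 + 1/e) K |t_n - p_n t_n|_2^2, and
   |p_n|_2^2 is close to tr(p_n)/d_n because p_n is close to a projection.
   Passing to the ultralimit, rk_2 <= (1 + e)(Tr_w [p] + O(e)), so rk_2 is
   below the trace of every such [p]. *)

Notation ReC := (@complex.Re RR).
Notation ImC := (@complex.Im RR).

Definition sqnorm (z : CC) : RR := ReC z ^+ 2 + ImC z ^+ 2.

Lemma sqnorm_ge0 z : 0 <= sqnorm z.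
Proof. by rewrite /sqnorm addr_ge0 // sqr_ge0. Qed.

Lemma sqnorm0 : sqnorm 0 = 0.
Proof. by rewrite /sqnorm /= expr0n /= addr0. Qed.

Lemma sqnorm1 : sqnorm 1 = 1.
Proof. by rewrite /sqnorm /= expr0n /= addr0 expr1n. Qed.

Lemma sqnormM a b : sqnorm (a * b) = sqnorm a * sqnorm b.
Proof. by case: a => a1 a2; case: b => b1 b2; rewrite /sqnorm /=; ring. Qed.

Lemma sqnormN a : sqnorm (- a) = sqnorm a.
Proof. by case: a => a1 a2; rewrite /sqnorm /=; ring. Qed.

Lemma sqnorm_conj a : sqnorm a^* = sqnorm a.
Proof. by case: a => a1 a2; rewrite /sqnorm /=; ring. Qed.

Lemma Re_conjCM a : ReC (a^* * a) = sqnorm a.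
Proof. by case: a => a1 a2; rewrite /sqnorm /=; ring. Qed.

Lemma normC2_sqnorm a : `|a| ^+ 2 = (sqnorm a)%:C%C.
Proof. by rewrite -add_Re2_Im2. Qed.

Lemma young_sqr (e x y : RR) : 0 < e -> 2 * x * y <= x ^+ 2 / e + e * y ^+ 2.
Proof.
move=> e_gt0; have : 0 <= e^-1 * (x - e * y) ^+ 2 by rewrite mulr_ge0 ?sqr_ge0 // invr_ge0 ltW.
have -> : e^-1 * (x - e * y) ^+ 2 = x ^+ 2 / e - 2 * x * y + e * y ^+ 2.
  by field; rewrite gt_eqF.
lra.
Qed.

Lemma sqnormD_le e a b : 0 < e ->
  sqnorm (a + b) <= (1 + e) * sqnorm a + (1 + e^-1) * sqnorm b.
Proof.
move=> e_gt0; case: a => a1 a2; case: b => b1 b2; rewrite /sqnorm /=.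
have := young_sqr b1 a1 e_gt0; have := young_sqr b2 a2 e_gt0; lra.
Qed.

Lemma normr_ReM_le e a b : 0 < e ->
  `|ReC (a * b)| <= (sqnorm a / e + e * sqnorm b) / 2.
Proof.
move=> e_gt0; case: a => a1 a2; case: b => b1 b2; rewrite /sqnorm /=.
have := young_sqr a1 b1 e_gt0; have := young_sqr a2 (- b2) e_gt0.
have := young_sqr a1 (- b1) e_gt0; have := young_sqr a2 b2 e_gt0.
rewrite ler_norml => *; apply/andP; split; lra.
Qed.

Definition ct m n (X : 'M[CC]_(m, n)) : 'M[CC]_(n, m) := \matrix_(i, j) (X j i)^*.

Definition hs m n (X : 'M[CC]_(m, n)) : RR := \sum_i \sum_j sqnorm (X i j).

Lemma adj_ct m (A : 'M[CC]_m) : adj A = ct A.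
Proof. by []. Qed.

Lemma ct_trmx m n (X : 'M[CC]_(m, n)) : map_mx Num.conj X^T = ct X.
Proof. by apply/matrixP => i j; rewrite !mxE. Qed.

Lemma ctK m n (X : 'M[CC]_(m, n)) : ct (ct X) = X.
Proof. by apply/matrixP => i j; rewrite !mxE conjCK. Qed.

Lemma ctM m n p (X : 'M[CC]_(m, n)) (Y : 'M[CC]_(n, p)) :
  ct (X *m Y) = ct Y *m ct X.
Proof.
apply/matrixP => i j; rewrite !mxE rmorph_sum; apply: eq_bigr => k _.
by rewrite !mxE rmorphM mulrC.
Qed.

Lemma ctB m n (X Y : 'M[CC]_(m, n)) : ct (X - Y) = ct X - ct Y.
Proof. by apply/matrixP => i j; rewrite !mxE rmorphB. Qed.

Lemma ct1 m : ct (1%:M : 'M[CC]_m) = 1%:M.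
Proof. by apply/matrixP => i j; rewrite !mxE eq_sym conjC_nat. Qed.

Lemma ct_diag_mx m (c : 'rV[CC]_m) : ct (diag_mx c) = diag_mx (map_mx Num.conj c).
Proof.
apply/matrixP => i j; rewrite !mxE rmorphMn eq_sym.
by case: (i =P j) => [->|_]; rewrite ?mulr1n ?mulr0n.
Qed.

Lemma hs_ge0 m n (X : 'M[CC]_(m, n)) : 0 <= hs X.
Proof. by do 2!apply: sumr_ge0 => ? _; exact: sqnorm_ge0. Qed.

Lemma hs0 m n : hs (0 : 'M[CC]_(m, n)) = 0.
Proof. by rewrite /hs big1 // => i _; rewrite big1 // => j _; rewrite mxE sqnorm0. Qed.

Lemma hs1 m : hs (1%:M : 'M[CC]_m) = m%:R.
Proof.
rewrite /hs (eq_bigr (fun _ => 1)) ?sumr_const ?card_ord // => i _.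
rewrite (bigD1 i) //= big1 ?addr0 => [|j /negbTE ji]; rewrite mxE.
  by rewrite eqxx sqnorm1.
by rewrite eq_sym ji sqnorm0.
Qed.

Lemma hsN m n (X : 'M[CC]_(m, n)) : hs (- X) = hs X.
Proof. by apply: eq_bigr => i _; apply: eq_bigr => j _; rewrite mxE sqnormN. Qed.

Lemma hs_ct m n (X : 'M[CC]_(m, n)) : hs (ct X) = hs X.
Proof.
rewrite /hs exchange_big; apply: eq_bigr => i _; apply: eq_bigr => j _.
by rewrite mxE sqnorm_conj.
Qed.

Lemma hs_trace m n (X : 'M[CC]_(m, n)) : hs X = ReC (\tr (ct X *m X)).
Proof.
rewrite /mxtrace raddf_sum /hs exchange_big /=; apply: eq_bigr => j _.
rewrite !mxE raddf_sum; apply: eq_bigr => i _.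
by rewrite mxE -Re_conjCM.
Qed.

Lemma nhs2_hs m (A : 'M[CC]_m) : nhs2 A = hs A / m%:R.
Proof. by rewrite /nhs2 /ntrRe adj_ct hs_trace. Qed.

Lemma nhs2_ge0 m (A : 'M[CC]_m) : 0 <= nhs2 A.
Proof. by rewrite nhs2_hs divr_ge0 ?hs_ge0. Qed.

Lemma vnorm2_hs m (v : 'cV[CC]_m) : vnorm2 v = (hs v)%:C%C.
Proof.
rewrite /vnorm2 /hs rmorph_sum; apply: eq_bigr => i _.
by rewrite big_ord1 normC2_sqnorm.
Qed.

Lemma hsD_le e m n (X Y : 'M[CC]_(m, n)) : 0 < e ->
  hs (X + Y) <= (1 + e) * hs X + (1 + e^-1) * hs Y.
Proof.
move=> e_gt0; rewrite /hs !mulr_sumr -big_split /=; apply: ler_sum => i _.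
rewrite !mulr_sumr -big_split /=; apply: ler_sum => j _.
by rewrite mxE; exact: sqnormD_le.
Qed.

Lemma hsB_le m n (X Y : 'M[CC]_(m, n)) : hs (X - Y) <= 2 * hs X + 2 * hs Y.
Proof. by have := hsD_le X (- Y) ltr01; rewrite invr1 hsN. Qed.

Lemma hs_mull_le c m n p (A : 'M[CC]_(m, n)) (X : 'M[CC]_(n, p)) :
  (forall v : 'cV_n, hs (A *m v) <= c * hs v) -> hs (A *m X) <= c * hs X.
Proof.
have hs_cols k l (Y : 'M[CC]_(k, l)) : hs Y = \sum_j hs (col j Y).
  rewrite /hs exchange_big; apply: eq_bigr => j _; apply: eq_bigr => i _.
  by rewrite big_ord1 mxE.
move=> hA; rewrite hs_cols [hs X]hs_cols mulr_sumr; apply: ler_sum => j _.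
by rewrite !colE -mulmxA; exact: hA.
Qed.

Lemma hs_mulmx_unitary m n (X : 'M[CC]_(m, n)) (U : 'M[CC]_n) :
  U *m ct U = 1%:M -> hs (X *m U) = hs X.
Proof.
move=> UU; rewrite !hs_trace ctM mxtrace_mulC -!mulmxA.
by rewrite !mulmxA -[X *m U *m ct U]mulmxA UU mulmx1 mxtrace_mulC.
Qed.

Lemma hs_mulmx_diag_le K m n (X : 'M[CC]_(m, n)) (c : 'rV[CC]_n) :
  (forall i, sqnorm (c 0 i) <= K) -> hs (X *m diag_mx c) <= K * hs X.
Proof.
move=> cK; rewrite /hs mulr_sumr; apply: ler_sum => i _; rewrite mulr_sumr.
apply: ler_sum => j _; rewrite mul_mx_diag mxE sqnormM mulrC.
by apply: ler_wpM2r; [exact: sqnorm_ge0 | exact: cK].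
Qed.

Lemma normr_Re_trace_le e m n (X : 'M[CC]_(m, n)) (Y : 'M[CC]_(n, m)) : 0 < e ->
  `|ReC (\tr (X *m Y))| <= (hs X / e + e * hs Y) / 2.
Proof.
move=> e_gt0; rewrite /mxtrace raddf_sum.
apply: le_trans (ler_norm_sum _ _ _) _.
have -> : (hs X / e + e * hs Y) / 2 =
    \sum_i \sum_j (sqnorm (X i j) / e + e * sqnorm (Y j i)) / 2.
  under [RHS]eq_bigr => i _ do rewrite -mulr_suml big_split /= -mulr_suml -mulr_sumr.
  rewrite -mulr_suml big_split /= -mulr_suml -mulr_sumr /hs.
  by rewrite [\sum_i \sum_j sqnorm (Y j i)]exchange_big.
apply: ler_sum => i _; rewrite mxE raddf_sum.
apply: le_trans (ler_norm_sum _ _ _) _; apply: ler_sum => j _.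
exact: normr_ReM_le.
Qed.

Lemma hs_proj_mul m n (q : 'M[CC]_m) (X : 'M[CC]_(m, n)) :
  ct q = q -> q *m q = q -> hs (q *m X) = ReC (\tr (ct X *m q *m X)).
Proof. by move=> qH qI; rewrite hs_trace ctM qH mulmxA -[ct X *m q *m q]mulmxA qI. Qed.

Lemma hs_proj_mull_le m n (q : 'M[CC]_m) (X : 'M[CC]_(m, n)) :
  ct q = q -> q *m q = q -> hs (q *m X) <= hs X.
Proof.
move=> qH qI; set r := 1%:M - q.
have rH : ct r = r by rewrite ctB ct1 qH.
have rI : r *m r = r by rewrite mulmxBl mul1mx mulmxBr mulmx1 qI subrr subr0.
have -> : hs X = hs (q *m X) + hs (r *m X).
  rewrite !hs_proj_mul // hs_trace -raddfD /= -mxtraceD -mulmxDl -mulmxDr.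
  by rewrite /r addrC subrK mulmx1.
by rewrite lerDl hs_ge0.
Qed.

Lemma hs_mulmx_proj_le m n (X : 'M[CC]_(n, m)) (q : 'M[CC]_m) :
  ct q = q -> q *m q = q -> hs (X *m q) <= hs X.
Proof. by move=> qH qI; rewrite -hs_ct ctM qH -[hs X]hs_ct hs_proj_mull_le. Qed.

Lemma mxtrace_pid_mx (F : fieldType) n r :
  (r <= n)%N -> \tr (pid_mx r : 'M[F]_n) = r%:R.
Proof.
move=> le_rn; rewrite /mxtrace (eq_bigr (fun i : 'I_n => ((i < r)%N)%:R)).
  rewrite -(big_mkord xpredT (fun i => ((i < r)%N)%:R)) (big_cat_nat (leq0n r) le_rn).
  rewrite /= [X in _ + X]big_nat_cond [X in _ + X]big1 ?addr0.
    rewrite big_nat_cond (eq_bigr (fun _ => 1)) => [|i /andP[/andP[_ ->]]] //.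
    by rewrite -big_nat_cond sumr_const_nat subn0.
  by move=> i /andP[/andP[le_ri _] _]; rewrite ltnNge le_ri.
by move=> i _; rewrite mxE eqxx.
Qed.

Lemma mxtrace_idem (F : fieldType) n (P : 'M[F]_n) :
  P *m P = P -> \tr P = (\rank P)%:R.
Proof.
move=> PP; have P_ebase := mulmx_ebase P.
set L := col_ebase P in P_ebase; set R := row_ebase P in P_ebase.
set Pi := pid_mx _ in P_ebase.
have Lu : L \in unitmx by exact: col_ebase_unit.
have Ru : R \in unitmx by exact: row_ebase_unit.
have PiRL : Pi *m (R *m L) *m Pi = Pi.
  have : L *m Pi *m R *m (L *m Pi *m R) = L *m Pi *m R by rewrite P_ebase.
  move=> /(congr1 (mulmx (invmx L))) /(congr1 (mulmx^~ (invmx R))).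
  by rewrite -!mulmxA !mulKmx // !mulmxV // !mulmx1.
have PiPi : Pi *m Pi = Pi by rewrite /Pi pid_mx_id ?rank_leq_row.
rewrite -{1}P_ebase -mulmxA mxtrace_mulC -mulmxA -{1}PiPi -mulmxA mxtrace_mulC.
by rewrite PiRL /Pi mxtrace_pid_mx ?rank_leq_row.
Qed.

Lemma mxrank_support (F : fieldType) n (A q g : 'M[F]_n) :
  q *m A = A -> q = A *m g -> \rank q = \rank A.
Proof.
move=> qA qAg; apply/eqP; rewrite eqn_leq {1}qAg mxrankM_maxl /=.
by rewrite -{1}qA mxrankM_maxl.
Qed.

Section UnitaryConjugation.
Variables (m : nat) (U : 'M[CC]_m).
Hypotheses (UU : U *m ct U = 1%:M) (UtU : ct U *m U = 1%:M).

Definition uconj (c : 'rV[CC]_m) := ct U *m diag_mx c *m U.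

Lemma uconjM (c c' : 'rV[CC]_m) : uconj c *m uconj c' = uconj (\row_i (c 0 i * c' 0 i)).
Proof.
rewrite /uconj !mulmxA -[ct U *m diag_mx c *m U *m ct U]mulmxA UU mulmx1.
by rewrite -[ct U *m diag_mx c *m diag_mx c']mulmxA mulmx_diag.
Qed.

Lemma ct_uconj (c : 'rV[CC]_m) : ct (uconj c) = uconj (map_mx Num.conj c).
Proof. by rewrite /uconj !ctM ctK ct_diag_mx mulmxA. Qed.

Lemma hs_mulmx_uconj_le K k (X : 'M[CC]_(k, m)) (c : 'rV[CC]_m) :
  (forall i, sqnorm (c 0 i) <= K) -> hs (X *m uconj c) <= K * hs X.
Proof.
move=> cK; rewrite /uconj !mulmxA hs_mulmx_unitary //.
by apply: le_trans (hs_mulmx_diag_le _ cK) _; rewrite hs_mulmx_unitary ?ctK.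
Qed.

Lemma eigenvalue_uconj (c : 'rV[CC]_m) i : eigenvalue (uconj c) (c 0 i).
Proof.
apply/eigenvalueP; exists (row i U).
  rewrite -row_mul /uconj !mulmxA UU mul1mx.
  by apply/rowP => j; rewrite mul_diag_mx !mxE.
apply/eqP => /(congr1 (mulmx^~ (ct U))); rewrite -row_mul UU mul0mx.
by move=> /rowP /(_ i); rewrite !mxE eqxx => /eqP; rewrite oner_eq0.
Qed.

End UnitaryConjugation.

Lemma hermitian_uconj m (A : 'M[CC]_m) : adj A = A ->
  exists U : 'M[CC]_m, [/\ U *m ct U = 1%:M, ct U *m U = 1%:M &
                            exists D, A = uconj U D].
Proof.
move=> A_herm; set U := spectralmx A.
have A_normal : A \is normalmx by rewrite qualifE /= ct_trmx -adj_ct A_herm.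
have Uinv : invmx U = ct U by rewrite invmx_unitary ?spectral_unitarymx ?ct_trmx.
exists U; rewrite -Uinv mulmxV ?mulVmx ?spectral_unit //; split => //.
by exists (spectral_diag A); rewrite /uconj -Uinv; exact/orthomx_spectralP.
Qed.

Definition support_inverse m (A g : 'M[CC]_m) (K : RR) :=
  [/\ ct (A *m g) = A *m g, A *m g *m (A *m g) = A *m g, A *m g *m A = A &
      forall k (X : 'M[CC]_(k, m)), hs (X *m g) <= K * hs X].

(* [g] is the Moore-Penrose inverse: in an orthonormal eigenbasis of [A] it
   inverts the nonzero eigenvalues and kills the kernel. *)
Lemma hermitian_support_inverse m (A : 'M[CC]_m) (K : RR) : adj A = A ->
  (forall a, eigenvalue A a -> sqnorm a^-1 <= K) ->
  exists g, support_inverse A g K.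
Proof.
move=> A_herm A_eig; have [U [UU UtU [D A_eq]]] := hermitian_uconj A_herm; subst A.
set E := \row_i (D 0 i * (D 0 i)^-1).
have E01 i : E 0 i = 0 \/ E 0 i = 1.
  rewrite mxE; have [->|D_neq0] := eqVneq (D 0 i) 0; first by left; rewrite mul0r.
  by right; rewrite mulfV.
exists (uconj U (\row_i (D 0 i)^-1)); rewrite /support_inverse.
have -> : uconj U D *m uconj U (\row_i (D 0 i)^-1) = uconj U E.
  by rewrite uconjM //; congr uconj; apply/rowP => i; rewrite !mxE.
split.
- rewrite ct_uconj //; congr uconj; apply/rowP => i.
  by rewrite mxE; case: (E01 i) => ->; rewrite ?conjC0 ?conjC1.
- rewrite uconjM //; congr uconj; apply/rowP => i.
  by rewrite mxE; case: (E01 i) => ->; rewrite ?mul0r ?mul1r.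
- rewrite uconjM //; congr uconj; apply/rowP => i; rewrite !mxE.
  by have [->|D_neq0] := eqVneq (D 0 i) 0; rewrite ?mul0r // mulfV ?mul1r.
- move=> k X; apply: (hs_mulmx_uconj_le UU UtU) => i.
  by rewrite mxE; apply: A_eig; apply: (eigenvalue_uconj UU).
Qed.

Lemma Re_trace_support m (A g : 'M[CC]_m) K :
  support_inverse A g K -> ReC (\tr (A *m g)) = (\rank A)%:R.
Proof.
move=> [_ qI qA _]; rewrite mxtrace_idem // (mxrank_support qA (erefl _)).
by rewrite raddfMn.
Qed.

Lemma hs_support m (A g : 'M[CC]_m) K :
  support_inverse A g K -> hs (A *m g) = (\rank A)%:R.
Proof.
move=> Ag; have [qH qI _ _] := Ag.
by rewrite hs_trace qH qI (Re_trace_support Ag).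
Qed.

(* Writing [ct p p = (ct p - p) p + (p p - p) + p], the first two terms are
   small when [p] is close to an orthogonal projection. *)
Lemma hs_le_Re_trace e m (p : 'M[CC]_m) : 0 < e ->
  hs p <= ReC (\tr p) + (hs (ct p - p) / e + e * hs p) / 2
                      + (hs (p *m p - p) / e + e * m%:R) / 2.
Proof.
move=> e_gt0.
have p_split : ct p *m p = (ct p - p) *m p + (p *m p - p) *m 1%:M + p.
  by rewrite mulmxBl mulmx1 -!addrA addNr addr0 addNr addr0.
have hp : hs p = ReC (\tr ((ct p - p) *m p))
                 + ReC (\tr ((p *m p - p) *m 1%:M)) + ReC (\tr p).
  by rewrite hs_trace p_split !mxtraceD !raddfD.
have := normr_Re_trace_le (ct p - p) p e_gt0.
have := normr_Re_trace_le (p *m p - p) 1%:M e_gt0; rewrite hs1.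
have := ler_norm (ReC (\tr ((ct p - p) *m p))).
have := ler_norm (ReC (\tr ((p *m p - p) *m 1%:M))).
lra.
Qed.

(* [q = p q + (t - p t) g] with [q = t g]. *)
Lemma hs_support_le e m (p t g : 'M[CC]_m) K : 0 < e -> support_inverse t g K ->
  hs (t *m g) <= (1 + e) * hs p + (1 + e^-1) * (K * hs (p *m t - t)).
Proof.
move=> e_gt0 [qH qI _ g_bound]; set q := t *m g in qH qI *.
have -> : q = p *m q + (q - p *m q) by rewrite addrC subrK.
apply: le_trans (hsD_le _ _ e_gt0) _; apply: lerD; apply: ler_wpM2l.
- by rewrite addr_ge0 // ltW.
- exact: hs_mulmx_proj_le.
- by rewrite addr_ge0 // invr_ge0 ltW.
have -> : q - p *m q = (t - p *m t) *m g by rewrite mulmxBl -mulmxA.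
by apply: le_trans (g_bound _ _) _; rewrite -opprB hsN.
Qed.

Lemma nhs2_support_le e m (p t g : 'M[CC]_m) K : (0 < m)%N -> 0 < e ->
  support_inverse t g K ->
  nhs2 (t *m g) <= (1 + e) * (ntrRe p + (nhs2 (adj p - p) / e + e * nhs2 p) / 2
                              + (nhs2 (p *m p - p) / e + e) / 2)
                   + (1 + e^-1) * (K * nhs2 (p *m t - t)).
Proof.
move=> m_gt0 e_gt0 tg; have m_pos : (0 : RR) < m%:R by rewrite ltr0n.
rewrite /ntrRe !nhs2_hs adj_ct ler_pdivrMr //.
apply: le_trans (hs_support_le p e_gt0 tg) _.
set T := ReC _; set H1 := hs (ct p - p); set H2 := hs (p *m p - p).
set H3 := hs (p *m t - t); set P := hs p.
have -> : ((1 + e) * (T / m%:R + (H1 / m%:R / e + e * (P / m%:R)) / 2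
            + (H2 / m%:R / e + e) / 2) + (1 + e^-1) * (K * (H3 / m%:R))) * m%:R
          = (1 + e) * (T + (H1 / e + e * P) / 2 + (H2 / e + e * m%:R) / 2)
            + (1 + e^-1) * (K * H3).
  by field; rewrite !gt_eqF.
rewrite lerD2r; apply: ler_wpM2l; first by rewrite addr_ge0 // ltW.
exact: hs_le_Re_trace.
Qed.

Lemma ler_of_perturb (R : realFieldType) (a b c : R) :
  (forall e, 0 < e -> b <= (1 + e) * (a + e * c)) -> b <= a.
Proof.
move=> b_le; apply/ler_addgt0Pr => eps eps_gt0.
set C := `|a| + 2 * `|c| + 1.
have C_gt0 : 0 < C by rewrite /C; have := normr_ge0 a; have := normr_ge0 c; lra.
set e := Num.min 1 (eps / C).
have e_gt0 : 0 < e by rewrite lt_min ltr01 divr_gt0.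
have e_le1 : e <= 1 by rewrite ge_min lexx.
have eC : e * C <= eps by rewrite -ler_pdivlMr // ge_min lexx orbT.
apply: le_trans (b_le e e_gt0) _.
have ea := ler_wpM2l (ltW e_gt0) (ler_norm a).
have ec := ler_wpM2l (ltW e_gt0) (ler_norm c).
have ee : e * e <= e by rewrite -[X in _ <= X]mulr1 ler_pM2l.
have eec : e * e * c <= e * `|c|.
  apply: le_trans (ler_wpM2l (mulr_ge0 (ltW e_gt0) (ltW e_gt0)) (ler_norm c)) _.
  exact: ler_wpM2r (normr_ge0 c) _ _ ee.
have eCE : e * C = e * `|a| + 2 * (e * `|c|) + e by rewrite /C; ring.
lra.
Qed.

Lemma inf_attained (R : realType) (E : set R) x : E x -> lbound E x -> inf E = x.
Proof.
move=> Ex x_lb; apply/eqP; rewrite eq_le lb_le_inf ?andbT //; last by exists x.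
by apply: ge_inf => //; exists x.
Qed.

Definition bounded_seq (u : nat -> RR) := exists B, forall n, `|u n| <= B.

Section Ultralimit.
Variable w : set_system nat.
Hypotheses (w_proper : ProperFilter w) (w_ultra : forall A, w A \/ w (~` A)).

(* A bounded sequence has a cluster point along [w] by compactness of
   [-B, B], and a cluster point of an ultrafilter is a limit. *)
Lemma ulim_cvg u : bounded_seq u -> u @ w --> ulim w u.
Proof.
move=> [B u_bd].
have w_seg : (u @ w) `[-B, B].
  by apply: (@filterE _ w _ (u @^-1` `[-B, B])) => n; rewrite /= in_itv /= -ler_norml.
have seg_compact : compact `[-B, B] by exact: segment_compact.
have [L [_ L_cluster]] := seg_compact (u @ w) _ w_seg.
have u_cvg : u @ w --> L.
  move=> N N_L; case: (w_ultra (u @^-1` N)) => // w_notN.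
  have uw_notN : (u @ w) (~` N) by [].
  by have [y [/= ]] := L_cluster _ _ uw_notN N_L.
by rewrite /ulim (cvg_lim (@Rhausdorff RR) u_cvg).
Qed.

Lemma ulim_cst c : ulim w (fun=> c) = c.
Proof. by rewrite /ulim lim_cst //; exact: Rhausdorff. Qed.

Lemma ler_cvg_pointwise (u v : nat -> RR) a b :
  u @ w --> a -> v @ w --> b -> (forall n, u n <= v n) -> a <= b.
Proof.
move=> u_a v_b uv; rewrite -subr_ge0.
apply: (cvgr_to_ge (cvgB (V := RR^o) v_b u_a)).
by apply: filterE => n; rewrite /= subr_ge0.
Qed.

End Ultralimit.

Section TracialRank.
Variables (w : set_system nat) (d : nat -> nat).
Hypotheses (w_proper : ProperFilter w) (w_ultra : forall A, w A \/ w (~` A)).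
Hypothesis d_gt0 : forall n, (0 < d n)%N.

Lemma eq_Meq (a b : mxseq d) : (forall n, a n = b n) -> Meq w a b.
Proof.
move=> ab; rewrite /Meq (_ : (fun n => _) = fun=> 0) ?ulim_cst //.
by apply: funext => n; rewrite ab subrr nhs2_hs hs0 mul0r.
Qed.

Lemma op_bounded_hs (x : mxseq d) : op_bounded x ->
  exists2 c, 0 <= c & forall n k (X : 'M[CC]_(d n, k)), hs (x n *m X) <= c * hs X.
Proof.
move=> [c x_le]; exists (c ^+ 2); first exact: sqr_ge0.
move=> n k X; apply: hs_mull_le => v.
by have := x_le n v; rewrite !vnorm2_hs -rmorphXn -rmorphM /= lecR.
Qed.

Lemma op_bounded_contraction (x : mxseq d) :
  (forall n (v : 'cV[CC]_(d n)), hs (x n *m v) <= hs v) -> op_bounded x.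
Proof. by move=> x_le; exists 1 => n v; rewrite !vnorm2_hs expr1n mul1r lecR. Qed.

Definition nhs2_bounded (x : mxseq d) := exists c, forall n, nhs2 (x n) <= c.

Lemma nhs2_bounded_op x : op_bounded x -> nhs2_bounded x.
Proof.
move=> /op_bounded_hs [c _ x_le]; exists c => n.
by rewrite nhs2_hs ler_pdivrMr ?ltr0n // -hs1 -[x n]mulmx1 x_le.
Qed.

Lemma nhs2_boundedB x y : nhs2_bounded x -> nhs2_bounded y ->
  nhs2_bounded (fun n => x n - y n).
Proof.
move=> [cx x_le] [cy y_le]; exists (2 * cx + 2 * cy) => n.
apply: le_trans (_ : 2 * nhs2 (x n) + 2 * nhs2 (y n) <= _); last first.
  by have := x_le n; have := y_le n; lra.
rewrite !nhs2_hs !mulrA -mulrDl; apply: ler_wpM2r; first by rewrite invr_ge0.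
exact: hsB_le.
Qed.

Lemma nhs2_bounded_adj x : nhs2_bounded x -> nhs2_bounded (fun n => adj (x n)).
Proof. by move=> [c x_le]; exists c => n; rewrite nhs2_hs adj_ct hs_ct -nhs2_hs. Qed.

Lemma nhs2_boundedM x y : op_bounded x -> nhs2_bounded y ->
  nhs2_bounded (fun n => x n *m y n).
Proof.
move=> /op_bounded_hs [c c_ge0 x_le] [cy y_le]; exists (c * cy) => n.
apply: le_trans (ler_wpM2l c_ge0 (y_le n)); rewrite !nhs2_hs mulrA.
by apply: ler_wpM2r; [rewrite invr_ge0 | exact: x_le].
Qed.

Lemma bounded_nhs2 x : nhs2_bounded x -> bounded_seq (fun n => nhs2 (x n)).
Proof. by move=> [c x_le]; exists c => n; rewrite ger0_norm ?nhs2_ge0. Qed.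

Lemma bounded_ntrRe x : nhs2_bounded x -> bounded_seq (fun n => ntrRe (x n)).
Proof.
move=> [c x_le]; exists ((c + 1) / 2) => n.
rewrite /ntrRe normrM normfV normr_nat ler_pdivrMr ?ltr0n //.
have := normr_Re_trace_le (x n) 1%:M ltr01; rewrite mulmx1 hs1 invr1 mulr1 mul1r.
by have := x_le n; rewrite nhs2_hs ler_pdivrMr ?ltr0n //; lra.
Qed.

Lemma bounded_rank (x : mxseq d) :
  bounded_seq (fun n => (\rank (x n))%:R / (d n)%:R).
Proof.
exists 1 => n; rewrite ger0_norm ?divr_ge0 ?ler0n // ler_pdivrMr ?ltr0n // mul1r.
by rewrite ler_nat rank_leq_row.
Qed.

Variables (t g : mxseq d) (K : RR).
Hypotheses (t_op : op_bounded t) (t_g : forall n, support_inverse (t n) (g n) K).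

Let q n : 'M[CC]_(d n) := t n *m g n.

Lemma Mproj_support : Mproj w q.
Proof.
split; last by apply: eq_Meq => n; case: (t_g n).
- apply: op_bounded_contraction => n v.
  by case: (t_g n) => qH qI _ _; exact: hs_proj_mull_le.
- by apply: eq_Meq => n; case: (t_g n).
Qed.

Lemma Meq_support : Meq w (fun n => q n *m t n) t.
Proof. by apply: eq_Meq => n; case: (t_g n). Qed.

Lemma Mtr_support : Mtr w q = rk2 w t.
Proof.
rewrite /Mtr /rk2; congr (ulim w _); apply: funext => n.
by rewrite /ntrRe (Re_trace_support (t_g n)).
Qed.

Lemma rk2_le_Mtr_perturb p e : Mproj w p -> Meq w (fun n => p n *m t n) t ->
  0 < e -> rk2 w t <= (1 + e) * (Mtr w p + e * ((ulim w (fun n => nhs2 (p n)) + 1) / 2)).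
Proof.
move=> [p_op pp_p adjp_p] pt_t e_gt0; have p_bd := nhs2_bounded_op p_op.
have cvg0 x : nhs2_bounded x -> ulim w (fun n => nhs2 (x n)) = 0 ->
    (fun n => nhs2 (x n)) @ w --> (0 : RR).
  by move=> /bounded_nhs2 x_bd x0; rewrite -x0; exact: ulim_cvg.
have adjp_cvg := cvg0 _ (nhs2_boundedB (nhs2_bounded_adj p_bd) p_bd) adjp_p.
have pp_cvg := cvg0 _ (nhs2_boundedB (nhs2_boundedM p_op p_bd) p_bd) pp_p.
have pt_cvg := cvg0 _ (nhs2_boundedB (nhs2_boundedM p_op (nhs2_bounded_op t_op))
                                       (nhs2_bounded_op t_op)) pt_t.
have tr_cvg := ulim_cvg w_proper w_ultra (bounded_ntrRe p_bd).
have hs_cvg := ulim_cvg w_proper w_ultra (bounded_nhs2 p_bd).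
have rank_cvg := ulim_cvg w_proper w_ultra (bounded_rank t).
have cst_cvg (c : RR) : (fun=> c) @ w --> c by exact: cvg_cst.
pose proof (cvgD (V := RR^o)
  (cvgM (cst_cvg (1 + e))
     (cvgD (V := RR^o) (cvgD (V := RR^o) tr_cvg
        (cvgM (cvgD (V := RR^o) (cvgM adjp_cvg (cst_cvg e^-1)) (cvgM (cst_cvg e) hs_cvg))
              (cst_cvg (2^-1))))
        (cvgM (cvgD (V := RR^o) (cvgM pp_cvg (cst_cvg e^-1)) (cst_cvg e)) (cst_cvg (2^-1)))))
  (cvgM (cst_cvg (1 + e^-1)) (cvgM (cst_cvg K) pt_cvg))) as rhs_cvg.
apply: le_trans (ler_cvg_pointwise w_proper rank_cvg rhs_cvg _) _.
  move=> n; rewrite /= -(hs_support (t_g n)) -nhs2_hs.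
  exact: nhs2_support_le.
by rewrite /Mtr !mul0r !add0r !mulr0 addr0; lra.
Qed.

Lemma rk2_le_Mtr p : Mproj w p -> Meq w (fun n => p n *m t n) t -> rk2 w t <= Mtr w p.
Proof. by move=> p_proj pt_t; apply: ler_of_perturb => e; exact: rk2_le_Mtr_perturb. Qed.

End TracialRank.

Theorem mainTheorem5 (w : set_system nat) (d : nat -> nat) (t : mxseq d) :
  nonprincipal_ultrafilter w ->
  (forall n, (0 < d n)%N) ->
  op_bounded t ->
  (forall n, adj (t n) = t n) ->
  (exists S : seq CC, forall (n : nat) (a : CC), eigenvalue (t n) a -> a \in S) ->
  rk1 w t = rk2 w t.
Proof.
move=> [w_proper w_ultra _] d_gt0 t_op t_herm [S t_spec].
pose K := \sum_(s <- S) sqnorm s^-1.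
have t_eig n a : eigenvalue (t n) a -> sqnorm a^-1 <= K.
  move=> /t_spec aS; rewrite /K (big_rem a) //= lerDl.
  by apply: sumr_ge0 => s _; exact: sqnorm_ge0.
pose g n := projT1 (cid (hermitian_support_inverse (t_herm n) (t_eig n))).
have t_g n : support_inverse (t n) (g n) K := projT2 (cid (hermitian_support_inverse (t_herm n) (t_eig n))).
apply: inf_attained.
  exists (fun n => t n *m g n); split.
  - exact: Mproj_support.
  - exact: Meq_support.
  - by rewrite (Mtr_support w t_g).
by move=> r [p [p_proj pt_t ->]]; exact: rk2_le_Mtr.
Qed.
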